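(* Let $X,Y$ be nonempty sets and let $F\colon X^*\to Y$ be a function such that $F_1$ is one-to-one. Consider: (i) $F$ is preassociative and unarily quasi-range-idempotent; (ii) there is a unique $\varepsilon$-standard operation $H\colon X^*\to X\cup\{\varepsilon\}$ such that $F^{\flat}=F_1\circ H^{\flat}$, namely $H^{\flat}=F_1^{-1}\circ F^{\flat}$, and this operation is associative and unarily idempotent. Then (i) implies (ii). If $F$ is standard, then (ii) implies (i).
   Context: $X^*=\bigcup_{n\geqslant 0}X^n$ is the set of finite tuples over $X$, $X^0=\{\varepsilon\}$ with $\varepsilon\notin X$ the empty tuple; $F(\mathbf{x},\mathbf{y})$ denotes $F$ applied to the concatenation, and concatenation with $\varepsilon$ leaves tuples unchanged. $F_n=F|_{X^n}$ ($X^1$ identified with $X$), $F^{\flat}=F|_{X^*\setminus\{\varepsilon\}}$. $F$ is standard if $F(\mathbf{x})=F(\varepsilon)$ only for $\mathbf{x}=\varepsilon$. $F$ is preassociative if for all $\mathbf{x},\mathbf{y},\mathbf{y}',\mathbf{z}\in X^*$, $F(\mathbf{y})=F(\mathbf{y}')$ implies $F(\mathbf{x},\mathbf{y},\mathbf{z})=F(\mathbf{x},\mathbf{y}',\mathbf{z})$. $F$ is unarily quasi-range-idempotent if $\mathrm{ran}(F_1)=\mathrm{ran}(F^{\flat})$. An operation $H\colon X^*\to X\cup\{\varepsilon\}$ is $\varepsilon$-standard if it is standard and $H(\varepsilon)=\varepsilon$; it is associative if $H(\mathbf{x},\mathbf{y},\mathbf{z})=H(\mathbf{x},H(\mathbf{y}),\mathbf{z})$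 for all $\mathbf{x},\mathbf{y},\mathbf{z}\in X^*$ (a value $\varepsilon$ treated as the empty tuple); it is unarily idempotent if $H_1$ is the identity of $X$. *)

(* X^* is modelled as [list X]; the empty tuple is [nil];
   concatenation is [++].  The codomain X ∪ {ε} is modelled as [option X],
   with [None] playing the role of ε. *)
From Stdlib Require Import List.
Import ListNotations.
Set Implicit Arguments.

Definition opt_tuple {X : Type} (o : option X) : list X :=
  match o with Some a => [a] | None => [] end.

Definition F1_injective {X Y : Type} (F : list X -> Y) : Prop :=
  forall a b : X, F [a] = F [b] -> a = b.

Definition standard {X Y : Type} (F : list X -> Y) : Prop :=
  forall x : list X, F x = F [] -> x = [].

Definition preassociative {X Y : Type} (F : list X -> Y) : Prop :=
  forall x y y' z : list X, F y = F y' -> F (x ++ y ++ z) = F (x ++ y' ++ z).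

Definition unarily_quasi_range_idempotent {X Y : Type} (F : list X -> Y) : Prop :=
  forall v : Y, (exists a : X, F [a] = v) <-> (exists x : list X, x <> [] /\ F x = v).

Definition eps_standard {X : Type} (H : list X -> option X) : Prop :=
  standard H /\ H [] = None.

Definition associative_op {X : Type} (H : list X -> option X) : Prop :=
  forall x y z : list X, H (x ++ y ++ z) = H (x ++ opt_tuple (H y) ++ z).

Definition unarily_idempotent {X : Type} (H : list X -> option X) : Prop :=
  forall a : X, H [a] = Some a.

(* F^flat = F_1 ∘ H^flat : for every nonempty x, H x is an element a of X
   (not ε) and F_1 a = F x. *)
Definition factors_through {X Y : Type} (F : list X -> Y) (H : list X -> option X) : Prop :=
  forall x : list X, x <> [] ->
    match H x with Some a => F [a] = F x | None => False end.

From Stdlib Require Import List ClassicalEpsilon.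
Import ListNotations.
Set Implicit Arguments.

(* Since F_1 is one-to-one, a factorization F^flat = F_1 ∘ H^flat forces
   H x to be the unique a with F [a] = F x; such an a exists for every
   nonempty x exactly when F is unarily quasi-range-idempotent.  Through
   this dictionary "F y = F y'" and "H y = H y'" coincide on nonempty
   tuples, so preassociativity of F (replace y by the one-letter tuple
   H y) is the same as associativity of H; standardness of F is what
   keeps the empty tuple out of the comparison in the converse. *)

Section Factorization.

Variables (X Y : Type) (F : list X -> Y).

Lemma factors_through_Some (H : list X -> option X) (x : list X) :
  factors_through F H -> x <> [] -> exists a, H x = Some a /\ F [a] = F x.
Proof.
  intros HF hx. specialize (HF x hx).
  destruct (H x) as [a|]; [exists a; auto | contradiction].
Qed.

Lemma factors_through_uqri (H : list X -> option X) :
  factors_through F H -> unarily_quasi_range_idempotent F.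
Proof.
  intros HF v. split.
  - intros [a <-]. exists [a]. split; [discriminate | reflexivity].
  - intros [x [hx <-]]. destruct (factors_through_Some HF hx) as [a [_ Ha]].
    exists a. exact Ha.
Qed.

Hypothesis F1_inj : F1_injective F.

Lemma factors_through_value (H : list X -> option X) (x : list X) (a : X) :
  factors_through F H -> x <> [] -> (H x = Some a <-> F [a] = F x).
Proof.
  intros HF hx. destruct (factors_through_Some HF hx) as [c [Hc Fc]].
  rewrite Hc. split.
  - intros e. injection e as <-. exact Fc.
  - intros Fa. f_equal. apply F1_inj. congruence.
Qed.

Lemma factors_through_congr (H : list X -> option X) (u v : list X) :
  factors_through F H -> u <> [] -> v <> [] -> (H u = H v <-> F u = F v).
Proof.
  intros HF hu hv.
  destruct (factors_through_Some HF hu) as [a [Ha Fa]].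
  destruct (factors_through_Some HF hv) as [b [Hb Fb]].
  rewrite Ha, Hb. split.
  - intros e. injection e as <-. congruence.
  - intros e. f_equal. apply F1_inj. congruence.
Qed.

Lemma factors_through_unique (H H' : list X -> option X) :
  H [] = None -> H' [] = None -> factors_through F H -> factors_through F H' ->
  forall x, H' x = H x.
Proof.
  intros H0 H0' HF HF' [|b l]; [congruence|].
  assert (hx : b :: l <> []) by discriminate.
  destruct (factors_through_Some HF' hx) as [a [Ha Fa]].
  rewrite Ha. symmetry. exact (proj2 (factors_through_value a HF hx) Fa).
Qed.

Lemma factors_through_unarily_idempotent (H : list X -> option X) :
  factors_through F H -> unarily_idempotent H.
Proof. intros HF a. apply (factors_through_value a HF); [discriminate | reflexivity]. Qed.

Lemma preassociative_factor_associative (H : list X -> option X) :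
  preassociative F -> H [] = None -> factors_through F H -> associative_op H.
Proof.
  intros PA H0 HF x [|b l] z; [rewrite H0; reflexivity|].
  destruct (factors_through_Some (x := b :: l) HF) as [a [Ha Fa]]; [discriminate|].
  rewrite Ha. apply (factors_through_congr HF); try apply not_eq_sym, app_cons_not_nil.
  cbn [opt_tuple]. apply PA. now symmetry.
Qed.

Lemma associative_factor_preassociative (H : list X -> option X) :
  standard F -> factors_through F H -> associative_op H -> preassociative F.
Proof.
  intros SF HF AS x y y' z Fy.
  destruct y as [|b l], y' as [|b' l'].
  - reflexivity.
  - symmetry in Fy. apply SF in Fy. discriminate.
  - apply SF in Fy. discriminate.
  - assert (Hy : H (b :: l) = H (b' :: l'))
      by (apply (factors_through_congr HF); [discriminate | discriminate | exact Fy]).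
    apply (factors_through_congr HF); try apply not_eq_sym, app_cons_not_nil.
    rewrite AS, (AS x (b' :: l') z), Hy. reflexivity.
Qed.

Definition canonical_factor (hX : inhabited X) (x : list X) : option X :=
  match x with
  | [] => None
  | _ :: _ => Some (epsilon hX (fun a => F [a] = F x))
  end.

Lemma canonical_factor_eps_standard (hX : inhabited X) :
  eps_standard (canonical_factor hX).
Proof. split; [intros [|b l] e; [reflexivity | discriminate] | reflexivity]. Qed.

Lemma canonical_factor_factors (hX : inhabited X) :
  unarily_quasi_range_idempotent F -> factors_through F (canonical_factor hX).
Proof.
  intros QR [|b l] hx; [contradiction|].
  apply (epsilon_spec hX (fun a => F [a] = F (b :: l))).
  apply QR. exists (b :: l). split; [exact hx | reflexivity].
Qed.

End Factorization.

Theorem corollary4p5 (X Y : Type) (hX : inhabited X) (hY : inhabited Y)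
  (F : list X -> Y) (hF1 : F1_injective F) :
  let cond_i := preassociative F /\ unarily_quasi_range_idempotent F in
  let cond_ii :=
    exists H : list X -> option X,
      eps_standard H /\ factors_through F H
      /\ (forall H' : list X -> option X,
            eps_standard H' -> factors_through F H' -> forall x, H' x = H x)
      /\ (forall (x : list X) (a : X), x <> [] -> (H x = Some a <-> F [a] = F x))
      /\ associative_op H /\ unarily_idempotent H in
  (cond_i -> cond_ii) /\ (standard F -> cond_ii -> cond_i).
Proof.
  intros cond_i cond_ii. split.
  - intros [PA QR].
    pose proof (canonical_factor_eps_standard F hX) as [SH H0].
    pose proof (canonical_factor_factors hX QR) as HF.
    exists (canonical_factor F hX).
    split; [exact (conj SH H0) | split; [exact HF | split; [| split; [| split]]]].
    + intros H' [_ H0'] HF'. exact (factors_through_unique hF1 H0 H0' HF HF').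
    + intros x a hx. exact (factors_through_value hF1 a HF hx).
    + exact (preassociative_factor_associative hF1 PA H0 HF).
    + exact (factors_through_unarily_idempotent hF1 HF).
  - intros SF [H [_ [HF [_ [_ [AS _]]]]]]. split.
    + exact (associative_factor_preassociative hF1 SF HF AS).
    + exact (factors_through_uqri HF).
Qed.
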